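(* Let $G$ be a finite Coxeter group acting by its geometric realisation on a Euclidean space $V$, with set of simple reflections $S$ and simple roots $e_s$, $s\in S$. Let $J\subset S$ satisfy the $(-1)$-condition and let $\sigma_J$ be the corresponding involution. Then the centraliser $C(\sigma_J)=\{g\in G: g\sigma_J=\sigma_J g\}$ coincides with the normaliser $N(G_J)=\{g\in G: gG_Jg^{-1}=G_J\}$ of the parabolic subgroup $G_J$.
   Context: For $J\subset S$, $G_J$ is the subgroup generated by $J$ and $V_J$ is the subspace of $V$ spanned by $\{e_s: s\in J\}$. $J$ satisfies the $(-1)$-condition if $G_J$ contains an element $\sigma_J$ acting on $V_J$ as $-\mathrm{Id}$; this element acts as the identity on $V_J^\perp$, is uniquely determined and is an involution. *)

From HB Require Import structures.
From mathcomp Require Import all_boot all_order all_algebra.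
From mathcomp Require Import reals trigo.
Set Implicit Arguments. Unset Strict Implicit. Unset Printing Implicit Defensive.
Import Order.TTheory GRing.Theory Num.Theory.
Local Open Scope ring_scope.

(* Coxeter matrix on S = 'I_n (entries finite: a finite Coxeter group has
   all m_st finite). *)
Definition coxeter_matrix (n : nat) (m : 'I_n -> 'I_n -> nat) : Prop :=
  (forall s, m s s = 1%N) /\ (forall s t, m s t = m t s) /\
  (forall s t, s != t -> (2 <= m s t)%N).

(* Bilinear form of the geometric realisation on V = R^S (basis e_s =
   standard basis row vectors): B(e_s, e_t) = - cos (pi / m_st). *)
Definition coxB (R : realType) (n : nat) (m : 'I_n -> 'I_n -> nat) : 'M[R]_n :=
  \matrix_(s, t) - cos (pi / (m s t)%:R).

Definition root_e (R : realType) (n : nat) (s : 'I_n) : 'rV[R]_n :=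
  delta_mx 0 s.

(* Simple reflection sigma_s, acting on row vectors on the right:
   v *m refl s = v - 2 B(v, e_s) e_s. *)
Definition refl (R : realType) (n : nat) (m : 'I_n -> 'I_n -> nat) (s : 'I_n)
  : 'M[R]_n :=
  1%:M - 2%:R *: (col s (coxB R m) *m root_e R s).

(* Elements of the subgroup G_J generated by {sigma_s : s in J}
   (products of words in the involutive generators). G = G_S. *)
Definition inGJ (R : realType) (n : nat) (m : 'I_n -> 'I_n -> nat)
  (J : {set 'I_n}) (g : 'M[R]_n) : Prop :=
  exists w : seq 'I_n, all (fun s => s \in J) w /\
    g = \prod_(s <- w) refl R m s.

Definition inG (R : realType) (n : nat) (m : 'I_n -> 'I_n -> nat)
  (g : 'M[R]_n) : Prop := inGJ m [set: 'I_n] g.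

Definition finite_coxeter (R : realType) (n : nat) (m : 'I_n -> 'I_n -> nat)
  : Prop := exists l : seq 'M[R]_n, forall g, inG m g -> g \in l.

(* V_J = span of e_s, s in J = vectors supported on J. *)
Definition in_VJ (R : realType) (n : nat) (J : {set 'I_n}) (v : 'rV[R]_n)
  : Prop := forall s, s \notin J -> v 0 s = 0.

Definition is_sigmaJ (R : realType) (n : nat) (m : 'I_n -> 'I_n -> nat)
  (J : {set 'I_n}) (sigma : 'M[R]_n) : Prop :=
  inGJ m J sigma /\ forall v, in_VJ J v -> v *m sigma = - v.

From HB Require Import structures.
From mathcomp Require Import all_boot all_order all_algebra.
From mathcomp Require Import boolp reals trigo.
From mathcomp Require Import ring lra zify.
Import Order.TTheory GRing.Theory Num.Theory.
Local Open Scope ring_scope.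
Set Implicit Arguments. Unset Strict Implicit. Unset Printing Implicit Defensive.

(* If g commutes with sigma_J
   and s is in J, then sigma_J negates the root e_s g, which therefore lies
   in V_J, and g^-1 r_s g is the reflection in that root.  A reflection
   whose root lies in V_J belongs to G_J: every root is positive or negative
   (Tits' lemma, by reduction to the dihedral subgroups generated by two
   simple reflections, whose roots are computed explicitly with sines), and
   a positive root of V_J other than a simple root is lowered inside V_J by
   some simple reflection of G_J; finiteness of G makes this descent
   terminate.  Hence g^-1 G_J g = G_J.
   Conversely, every element of G_J moves vectors only within V_J and fixes
   the B-orthogonal of V_J, so at most one element of G_J acts as -1 on V_J.
   If g normalises G_J, then g maps V_J into itself (g^-1 sigma_J g is in
   G_J and negates V_J g), so g sigma_J g^-1 is such an element: it is
   sigma_J. *)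

Lemma exists_minimal (P : nat -> Prop) k : P k ->
  exists j, P j /\ forall i, P i -> (j <= i)%N.
Proof.
move=> Pk; have exP : exists k, `[< P k >] by exists k; apply/asboolP.
case: (ex_minnP exP) => j /asboolP Pj minj.
by exists j; split=> // i /asboolP /minj.
Qed.

Lemma sub_count_lt (T : eqType) (p1 p2 : pred T) (s : seq T) x :
  subpred p1 p2 -> x \in s -> p2 x -> ~~ p1 x -> (count p1 s < count p2 s)%N.
Proof.
move=> sub12; elim: s => // y s IH; rewrite inE => /orP [/eqP <-|xs] p2x p1x /=.
  by rewrite p2x (negbTE p1x) add0n add1n ltnS sub_count.
have := IH xs p2x p1x; have := sub12 y.
by case: (p1 y); case: (p2 y) => //=; lia.
Qed.

Lemma sin_natSS (R : realType) (x : R) j :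
  sin (j.+2%:R * x) = 2 * cos x * sin (j.+1%:R * x) - sin (j%:R * x).
Proof.
have -> : j.+2%:R * x = j.+1%:R * x + x by rewrite -natr1 mulrDl mul1r.
have -> : j%:R * x = j.+1%:R * x - x by rewrite -natr1 mulrDl mul1r addrK.
by rewrite sinD sinB; ring.
Qed.

Section PiDivAngle.
Variables (R : realType) (k : nat).
Hypothesis k_ge2 : (2 <= k)%N.

Lemma natr_mul_pi_div : k%:R * (pi / k%:R) = pi :> R.
Proof. by rewrite mulrC divfK // pnatr_eq0 -lt0n (leq_trans _ k_ge2). Qed.

Lemma sin_pi_div_gt0 : 0 < sin (pi / k%:R : R).
Proof.
have k_gt0 : (0 < k)%N by apply: leq_trans k_ge2.
apply: sin_gt0_pi; rewrite divr_gt0 ?pi_gt0 ?ltr0n //=.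
by rewrite ltr_pdivrMr ?ltr0n // ltr_pMr ?pi_gt0 // ltr1n.
Qed.

Lemma sin_natr_mul_pi_div_ge0 j : (j <= k)%N -> 0 <= sin (j%:R * (pi / k%:R) : R).
Proof.
have k_gt0 : (0 < k)%N by apply: leq_trans k_ge2.
have angle_gt0 : 0 < pi / k%:R :> R by rewrite divr_gt0 ?pi_gt0 ?ltr0n.
move=> jk; apply: sin_ge0_pi; rewrite mulr_ge0 ?ler0n ?(ltW angle_gt0) //=.
by rewrite -{2}natr_mul_pi_div ler_pM2r // ler_nat.
Qed.

End PiDivAngle.

Section CoxeterGeometry.
Variables (R : realType) (n : nat) (m : 'I_n -> 'I_n -> nat).
Hypothesis coxm : coxeter_matrix m.

Local Notation B := (coxB R m).
Local Notation r := (refl R m).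
Local Notation e := (@root_e R n).
Implicit Types (s t : 'I_n) (I : {set 'I_n}) (w : seq 'I_n).
Implicit Types (v c : 'rV[R]_n) (g h sigma tau : 'M[R]_n).

Definition bform (v v' : 'rV[R]_n) : R := (v *m B *m v'^T) 0 0.
Definition prod_refl w : 'M[R]_n := \prod_(s <- w) r s.
Definition rootrefl (c : 'rV[R]_n) : 'M[R]_n := 1%:M - 2%:R *: (B *m c^T *m c).
Definition height v : R := \sum_i v 0 i.
Definition nonneg_row v := forall i, 0 <= v 0 i.

Lemma coxm_sym s t : m s t = m t s. Proof. by case: coxm => _ []. Qed.

Lemma coxm_ge2 s t : s != t -> (2 <= m s t)%N.
Proof. by case: coxm => _ [_]; apply. Qed.

Lemma coxB_tr : B^T = B.
Proof. by apply/matrixP => i j; rewrite !mxE coxm_sym. Qed.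

Lemma coxB_diag s : B s s = 1.
Proof. by case: coxm => m1 _; rewrite mxE m1 divr1 cospi opprK. Qed.

Lemma bform_sym v v' : bform v v' = bform v' v.
Proof.
have -> : bform v v' = (v *m B *m v'^T)^T 0 0 by rewrite mxE.
by rewrite !trmx_mul trmxK coxB_tr mulmxA.
Qed.

Lemma bformDl v1 v2 v' : bform (v1 + v2) v' = bform v1 v' + bform v2 v'.
Proof. by rewrite /bform !mulmxDl mxE. Qed.
Lemma bformZl a v v' : bform (a *: v) v' = a * bform v v'.
Proof. by rewrite /bform -!scalemxAl mxE. Qed.
Lemma bformNl v v' : bform (- v) v' = - bform v v'.
Proof. by rewrite -scaleN1r bformZl mulN1r. Qed.
Lemma bformBl v1 v2 v' : bform (v1 - v2) v' = bform v1 v' - bform v2 v'.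
Proof. by rewrite bformDl bformNl. Qed.
Lemma bformDr v v1 v2 : bform v (v1 + v2) = bform v v1 + bform v v2.
Proof. by rewrite bform_sym bformDl !(bform_sym v). Qed.
Lemma bformZr a v v' : bform v (a *: v') = a * bform v v'.
Proof. by rewrite bform_sym bformZl bform_sym. Qed.
Lemma bformNr v v' : bform v (- v') = - bform v v'.
Proof. by rewrite bform_sym bformNl bform_sym. Qed.
Lemma bformBr v v1 v2 : bform v (v1 - v2) = bform v v1 - bform v v2.
Proof. by rewrite bformDr bformNr. Qed.

Lemma bform_e v s : bform v (e s) = (v *m B) 0 s.
Proof.
rewrite /bform /root_e trmx_delta mxE (bigD1 s) //= big1 => [|j /negbTE js].
  by rewrite [delta_mx _ _ _ _]mxE !eqxx mulr1 addr0.
by rewrite [delta_mx _ _ _ _]mxE js mulr0.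
Qed.

Lemma bform_ee s t : bform (e s) (e t) = B s t.
Proof. by rewrite bform_e /root_e -rowE mxE. Qed.

Lemma bform_self v : bform v v = \sum_s v 0 s * bform v (e s).
Proof.
rewrite /bform [in LHS]mxE; apply: eq_bigr => s _.
by rewrite [v^T s 0]mxE -/(bform v (e s)) bform_e mulrC.
Qed.

Lemma rootrefl_act v c : v *m rootrefl c = v - (2 * bform v c) *: c.
Proof.
rewrite /rootrefl mulmxBr mulmx1 -scalemxAr !mulmxA.
by rewrite [v *m B *m c^T]mx11_scalar mul_scalar_mx scalerA.
Qed.

Lemma refl_rootrefl s : r s = rootrefl (e s).
Proof. by rewrite /refl /rootrefl /root_e colE trmx_delta. Qed.

Lemma refl_act v s : v *m r s = v - (2 * bform v (e s)) *: e s.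
Proof. by rewrite refl_rootrefl rootrefl_act. Qed.

Lemma rootreflN c : rootrefl (- c) = rootrefl c.
Proof. by rewrite /rootrefl (linearN trmx) !mulmxN mulNmx opprK. Qed.

Section UnitRoot.
Variable c : 'rV[R]_n.
Hypothesis c_unit : bform c c = 1.

Lemma rootrefl_root : c *m rootrefl c = - c.
Proof. by rewrite rootrefl_act c_unit mulr1 scaler_nat mulr2n opprD addNKr. Qed.

Lemma rootreflK : rootrefl c *m rootrefl c = 1%:M.
Proof.
apply/eqP/mulmxP => v; rewrite mulmxA mulmx1 [v *m _]rootrefl_act mulmxBl.
by rewrite -scalemxAl rootrefl_root rootrefl_act scalerN opprK subrK.
Qed.

Lemma bform_rootrefl v v' : bform (v *m rootrefl c) (v' *m rootrefl c) = bform v v'.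
Proof.
rewrite !rootrefl_act !bformBl !bformBr !bformZl !bformZr c_unit (bform_sym c v').
ring.
Qed.

End UnitRoot.

Lemma bform_ee_diag s : bform (e s) (e s) = 1.
Proof. by rewrite bform_ee coxB_diag. Qed.

Lemma refl_e s : e s *m r s = - e s.
Proof. by rewrite refl_rootrefl rootrefl_root ?bform_ee_diag. Qed.

Lemma refl_invol s : r s *m r s = 1%:M.
Proof. by rewrite refl_rootrefl rootreflK ?bform_ee_diag. Qed.

Lemma bform_refl v v' s : bform (v *m r s) (v' *m r s) = bform v v'.
Proof. by rewrite refl_rootrefl bform_rootrefl ?bform_ee_diag. Qed.

Lemma root_e_refl s t : e s *m r t = e s + (2 * cos (pi / (m s t)%:R)) *: e t.
Proof. by rewrite refl_act bform_ee mxE mulrN scaleNr opprK. Qed.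

Lemma prod_refl_nil : prod_refl [::] = 1%:M.
Proof. by rewrite /prod_refl big_nil. Qed.
Lemma prod_refl_cons s w : prod_refl (s :: w) = r s *m prod_refl w.
Proof. by rewrite /prod_refl big_cons. Qed.
Lemma prod_refl_cat w1 w2 : prod_refl (w1 ++ w2) = prod_refl w1 *m prod_refl w2.
Proof. by rewrite /prod_refl big_cat. Qed.
Lemma prod_refl_rcons w s : prod_refl (rcons w s) = prod_refl w *m r s.
Proof. by rewrite -cats1 prod_refl_cat prod_refl_cons prod_refl_nil mulmx1. Qed.

Lemma prod_refl_consK s w : r s *m prod_refl (s :: w) = prod_refl w.
Proof. by rewrite prod_refl_cons mulmxA refl_invol mul1mx. Qed.

Lemma prod_refl_revK w : prod_refl (rev w) *m prod_refl w = 1%:M.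
Proof.
elim: w => [|s w IH]; first by rewrite prod_refl_nil mulmx1.
by rewrite rev_cons prod_refl_rcons -mulmxA prod_refl_consK IH.
Qed.

Lemma prod_refl_Krev w : prod_refl w *m prod_refl (rev w) = 1%:M.
Proof. by rewrite -{1}(revK w) prod_refl_revK. Qed.

Lemma invmx_prod_refl w : invmx (prod_refl w) = prod_refl (rev w).
Proof.
have [wU _] := mulmx1_unit (prod_refl_Krev w).
by rewrite -[LHS]mulmx1 -(prod_refl_Krev w) mulmxA mulVmx // mul1mx.
Qed.

Lemma bform_prod_refl v v' w :
  bform (v *m prod_refl w) (v' *m prod_refl w) = bform v v'.
Proof.
elim: w v v' => [|s w IH] v v'; first by rewrite prod_refl_nil !mulmx1.
by rewrite prod_refl_cons !mulmxA IH bform_refl.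
Qed.

Lemma bform_root s w : bform (e s *m prod_refl w) (e s *m prod_refl w) = 1.
Proof. by rewrite bform_prod_refl bform_ee_diag. Qed.

Lemma rootrefl_mul c g g' : g' *m g = 1%:M ->
    (forall v v', bform (v *m g) (v' *m g) = bform v v') ->
  rootrefl (c *m g) = g' *m rootrefl c *m g.
Proof.
move=> gK g_isom; apply/eqP/mulmxP => v.
have vE : v = v *m g' *m g by rewrite -mulmxA gK mulmx1.
rewrite !mulmxA rootrefl_act [v *m g' *m _]rootrefl_act mulmxBl -scalemxAl -vE.
by congr (_ - (2 * _) *: _); rewrite {1}vE g_isom.
Qed.

Lemma prod_refl_conj s w :
  prod_refl (rev w) *m r s *m prod_refl w = rootrefl (e s *m prod_refl w).
Proof.
have w_isom v v' := bform_prod_refl v v' w.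
by rewrite (rootrefl_mul _ (prod_refl_revK w) w_isom) refl_rootrefl.
Qed.

Lemma rootrefl_refl c s : rootrefl (c *m r s) = r s *m rootrefl c *m r s.
Proof. exact: rootrefl_mul (refl_invol s) (fun v v' => bform_refl v v' s). Qed.

Lemma height_refl v s : height (v *m r s) = height v - 2 * bform v (e s).
Proof.
have height_e : height (e s) = 1.
  rewrite /height (bigD1 s) //= big1 => [|j /negbTE js]; first by rewrite mxE !eqxx addr0.
  by rewrite mxE js.
rewrite refl_act -[in RHS](mulr1 (2 * _)) -height_e /height mulr_sumr -sumrB.
by apply: eq_bigr => i _; rewrite !mxE.
Qed.

Lemma nonneg_row_comb a a' v v' : 0 <= a -> 0 <= a' ->
  nonneg_row v -> nonneg_row v' -> nonneg_row (a *: v + a' *: v').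
Proof.
by move=> a0 a'0 v0 v'0 i; rewrite !mxE addr_ge0 // mulr_ge0.
Qed.

Section Parabolic.
Variable J : {set 'I_n}.

Lemma in_VJD v v' : in_VJ J v -> in_VJ J v' -> in_VJ J (v + v').
Proof. by move=> vJ v'J s sJ; rewrite mxE vJ // v'J // addr0. Qed.
Lemma in_VJZ a v : in_VJ J v -> in_VJ J (a *: v).
Proof. by move=> vJ s sJ; rewrite mxE vJ // mulr0. Qed.
Lemma in_VJN v : in_VJ J v -> in_VJ J (- v).
Proof. by move=> vJ s sJ; rewrite mxE vJ // oppr0. Qed.
Lemma in_VJB v v' : in_VJ J v -> in_VJ J v' -> in_VJ J (v - v').
Proof. by move=> vJ v'J; apply/in_VJD/in_VJN. Qed.
Lemma in_VJ_e s : s \in J -> in_VJ J (e s).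
Proof. by move=> sJ t tJ; rewrite mxE /=; case: eqP => // ts; rewrite ts sJ in tJ. Qed.

Lemma inGJ_refl s : s \in J -> inGJ m J (r s).
Proof. by move=> sJ; exists [:: s]; rewrite /= sJ big_seq1. Qed.

Lemma inGJ_mul g g' : inGJ m J g -> inGJ m J g' -> inGJ m J (g *m g').
Proof.
move=> [w [wJ ->]] [w' [w'J ->]]; exists (w ++ w').
by rewrite all_cat wJ w'J big_cat.
Qed.

Lemma inGJ_sub_VJ h v : inGJ m J h -> in_VJ J (v *m h - v).
Proof.
case=> w [wJ ->]; rewrite -/(prod_refl w); elim: w wJ v => [|x w IH] /= wJ v.
  by rewrite prod_refl_nil mulmx1 subrr => s _; rewrite mxE.
case/andP: wJ => xJ wJ; rewrite prod_refl_cons mulmxA.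
have -> : v *m r x *m prod_refl w - v =
    (v *m r x *m prod_refl w - v *m r x) + (v *m r x - v) by rewrite addrA subrK.
apply: in_VJD; first exact: IH.
by rewrite refl_act addrC addKr; apply/in_VJN/in_VJZ/in_VJ_e.
Qed.

Lemma inGJ_fix h v : inGJ m J h ->
  (forall s, s \in J -> bform v (e s) = 0) -> v *m h = v.
Proof.
case=> w [wJ ->] vperp; elim: w wJ => [|x w IH] /=; first by rewrite big_nil mulmx1.
by case/andP => xJ wJ; rewrite big_cons mulmxA refl_act vperp // mulr0 scale0r subr0 IH.
Qed.

Lemma inGJ_neg_VJ h v : inGJ m J h -> v *m h = - v -> in_VJ J v.
Proof.
move=> hJ vh; have := inGJ_sub_VJ v hJ.
rewrite vh -opprD -mulr2n -scaler_nat -scaleNr => /(in_VJZ (- 2%:R)^-1).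
by rewrite scalerA mulVf ?scale1r // oppr_eq0 pnatr_eq0.
Qed.

Lemma inGJ_conj w :
    (forall s, s \in J -> inGJ m J (prod_refl (rev w) *m r s *m prod_refl w)) ->
  forall h, inGJ m J h -> inGJ m J (prod_refl (rev w) *m h *m prod_refl w).
Proof.
move=> conj_gen h [wh [whJ ->]]; rewrite -/(prod_refl wh).
elim: wh whJ => [_|x wh IH /andP [xJ whJ]].
  by rewrite prod_refl_nil mulmx1 prod_refl_revK; exists [::]; rewrite big_nil.
have -> : prod_refl (rev w) *m prod_refl (x :: wh) *m prod_refl w =
    prod_refl (rev w) *m r x *m prod_refl w *m
    (prod_refl (rev w) *m prod_refl wh *m prod_refl w).
  by rewrite prod_refl_cons !mulmxA -(mulmxA _ (prod_refl w)) prod_refl_Krev mulmx1.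
exact: inGJ_mul (conj_gen x xJ) (IH whJ).
Qed.

Lemma sigmaJ_perp sigma v s : is_sigmaJ m J sigma -> s \in J ->
  bform (v + v *m sigma) (e s) = 0.
Proof.
case=> [[w [_ ->]] sigma_neg] sJ; rewrite -/(prod_refl w) in sigma_neg *.
have es_neg := sigma_neg _ (in_VJ_e sJ).
by rewrite bformDl -[bform (v *m _) _]opprK -bformNr -es_neg bform_prod_refl subrr.
Qed.

Lemma sigmaJ_unique sigma tau : is_sigmaJ m J sigma -> is_sigmaJ m J tau ->
  sigma = tau.
Proof.
move=> sigmaJ tauJ; apply/eqP/mulmxP => v.
have [a aJ [b bperp vE]] : exists2 a, in_VJ J a & exists2 b,
    (forall s, s \in J -> bform b (e s) = 0) & v = 2^-1 *: (a + b).
  exists (v - v *m sigma); first by rewrite -opprB; apply/in_VJN/inGJ_sub_VJ/sigmaJ.1.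
  exists (v + v *m sigma); first by move=> s; apply: sigmaJ_perp.
  by rewrite addrACA addNr addr0 -mulr2n -scaler_nat scalerA mulVf ?scale1r ?pnatr_eq0.
rewrite vE -!scalemxAl !mulmxDl sigmaJ.2 // tauJ.2 //.
by rewrite (inGJ_fix sigmaJ.1 bperp) (inGJ_fix tauJ.1 bperp).
Qed.

Lemma normaliser_centralises sigma g : is_sigmaJ m J sigma -> inG m g ->
    (forall h, inGJ m J h <->
       exists h', inGJ m J h' /\ h = g *m h' *m invmx g) ->
  g *m sigma = sigma *m g.
Proof.
move=> sigmaJ [w [_ ->]]; rewrite -/(prod_refl w) invmx_prod_refl => norm_w.
have [h' [h'J sigmaE]] := (norm_w sigma).1 sigmaJ.1.
have VJ_stable v : in_VJ J v -> in_VJ J (v *m prod_refl w).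
  move=> vJ; apply: (inGJ_neg_VJ h'J).
  have <- : v *m sigma *m prod_refl w = v *m prod_refl w *m h'.
    by rewrite sigmaE !mulmxA -mulmxA prod_refl_revK mulmx1.
  by rewrite sigmaJ.2 // mulNmx.
pose tau := prod_refl w *m sigma *m prod_refl (rev w).
have tauJ : is_sigmaJ m J tau.
  split; first by apply/norm_w; exists sigma; split => //; exact: sigmaJ.1.
  move=> v vJ; rewrite !mulmxA (sigmaJ.2 _ (VJ_stable _ vJ)) mulNmx.
  by rewrite -mulmxA prod_refl_Krev mulmx1.
by rewrite {2}(sigmaJ_unique sigmaJ tauJ) /tau -mulmxA prod_refl_revK mulmx1.
Qed.

End Parabolic.

Fixpoint alt a b j : seq 'I_n := if j is j'.+1 then a :: alt b a j' else [::].

Lemma size_alt a b j : size (alt a b j) = j.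
Proof. by elim: j a b => //= j IH a b; rewrite IH. Qed.

Lemma alt_in a b j : all [in [set a; b]] (alt a b j).
Proof. by elim: j a b => //= j IH a b; rewrite !inE eqxx /= setUC IH. Qed.

Lemma alt_cat a b i j :
  alt a b (i + j) = alt a b i ++ (if odd i then alt b a j else alt a b j).
Proof. by elim: i a b => //= i IH a b; rewrite IH; case: (odd i). Qed.

Lemma alt_rcons a b j : alt a b j.+1 = rcons (alt a b j) (if odd j then b else a).
Proof. by rewrite -addn1 alt_cat -cats1; case: (odd j). Qed.

Section Dihedral.
Variables a b : 'I_n.
Hypothesis hab : a != b.
Local Notation th := (pi / (m a b)%:R : R).

(* r_a and r_b act on span(e_a, e_b) with off-diagonal entries 2 cos th, so
   the coordinates follow the recurrence of [sin_natSS]. *)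
Lemma alt_root j : sin th *: (e a *m prod_refl (alt b a j)) =
  sin (j.+1%:R * th) *: (if odd j then e b else e a) +
  sin (j%:R * th) *: (if odd j then e a else e b).
Proof.
elim: j => [|j IH].
  by rewrite /= prod_refl_nil mulmx1 mul1r mul0r sin0 scale0r addr0.
rewrite alt_rcons prod_refl_rcons mulmxA scalemxAl IH mulmxDl -!scalemxAl sin_natSS /=.
case: (odd j) => /=; rewrite refl_e root_e_refl ?(coxm_sym b a);
  by apply/rowP => i; rewrite !mxE; ring.
Qed.

Lemma alt_root_nonneg k : (k < m a b)%N -> exists al be,
  [/\ 0 <= al, 0 <= be & e a *m prod_refl (alt b a k) = al *: e a + be *: e b].
Proof.
move=> km; have mab := coxm_ge2 hab.
have sth := sin_pi_div_gt0 R mab.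
have s1 := sin_natr_mul_pi_div_ge0 R mab km.
have s0 := sin_natr_mul_pi_div_ge0 R mab (ltnW km).
exists ((if odd k then sin (k%:R * th) else sin (k.+1%:R * th)) / sin th).
exists ((if odd k then sin (k.+1%:R * th) else sin (k%:R * th)) / sin th).
split; try by case: (odd k); rewrite divr_ge0 // ltW.
apply: (scalerI (lt0r_neq0 sth)); rewrite alt_root.
by case: (odd k); apply/rowP => i; rewrite !mxE; field; apply: lt0r_neq0.
Qed.

Lemma braid_root :
  e a *m prod_refl (alt a b (m a b)) = e a *m prod_refl (alt b a (m a b)).
Proof.
have mab := coxm_ge2 hab.
have [k Ek] : exists k, m a b = k.+1 by exists (m a b).-1; rewrite prednK // ltnW.
have kth : k.+1%:R * th = pi by rewrite -Ek natr_mul_pi_div.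
move: kth (alt_root k) (alt_root k.+1); set t := th => kth h1 h2.
have s0 : sin (k%:R * t) = sin t.
  have -> : k%:R * t = pi - t by rewrite -kth -natr1 mulrDl mul1r addrK.
  by rewrite sinB sinpi cospi; ring.
have s2 : sin (k.+2%:R * t) = - sin t.
  have -> : k.+2%:R * t = pi + t by rewrite -kth -natr1 mulrDl mul1r.
  by rewrite sinD sinpi cospi; ring.
rewrite kth sinpi s0 in h1; rewrite s2 kth sinpi in h2.
rewrite Ek /= prod_refl_cons mulmxA refl_e mulNmx.
apply: (scalerI (lt0r_neq0 (sin_pi_div_gt0 R mab))); rewrite scalerN h1 h2 /=.
by case: (odd k); apply/rowP => i; rewrite !mxE; ring.
Qed.

End Dihedral.

(* The B-orthogonal of span(e_a, e_b) is a complement, since the Gram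
   determinant of e_a, e_b is sin^2 (pi / m_ab) > 0; the reflections r_a, r_b
   fix it pointwise. *)
Lemma prod_refl_pair_eq a b w1 w2 : a != b ->
    all [in [set a; b]] w1 -> all [in [set a; b]] w2 ->
    e a *m prod_refl w1 = e a *m prod_refl w2 ->
    e b *m prod_refl w1 = e b *m prod_refl w2 ->
  prod_refl w1 = prod_refl w2.
Proof.
move=> hab w1ab w2ab eaE ebE; apply/eqP/mulmxP => v.
pose c : R := cos (pi / (m a b)%:R).
have hc : 1 - c ^+ 2 != 0.
  by rewrite -sin2cos2 expf_neq0 // lt0r_neq0 // sin_pi_div_gt0 // coxm_ge2.
pose x := (bform v (e a) + c * bform v (e b)) / (1 - c ^+ 2).
pose y := (bform v (e b) + c * bform v (e a)) / (1 - c ^+ 2).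
pose q := v - x *: e a - y *: e b.
have vE : v = x *: e a + y *: e b + q by rewrite /q; apply/rowP => i; rewrite !mxE; ring.
have q_perp z : z \in [set a; b] -> bform q (e z) = 0.
  rewrite /q !inE => /orP[] /eqP ->; rewrite !bformBl !bformZl !bform_ee !coxB_diag mxE;
    by rewrite ?(coxm_sym b a) /x /y -/c; field.
have q_fix w : all [in [set a; b]] w -> q *m prod_refl w = q.
  by move=> wab; apply: inGJ_fix q_perp; exists w.
clearbody x y q.
by rewrite vE !mulmxDl -!scalemxAl eaE ebE !q_fix.
Qed.

Lemma braid a b : a != b -> prod_refl (alt a b (m a b)) = prod_refl (alt b a (m a b)).
Proof.
move=> hab; have hba : b != a by rewrite eq_sym.
apply: prod_refl_pair_eq hab (alt_in _ _ _) _ (braid_root hab) _.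
  by rewrite setUC alt_in.
by rewrite coxm_sym (braid_root hba).
Qed.

Definition reduced_in I w := forall w', all [in I] w' ->
  prod_refl w' = prod_refl w -> (size w <= size w')%N.
Definition left_ascent_in I s w := forall w', all [in I] w' ->
  prod_refl w' = r s *m prod_refl w -> (size w <= size w')%N.
Local Notation reduced := (reduced_in [set: 'I_n]).
Local Notation left_ascent := (left_ascent_in [set: 'I_n]).

Lemma all_setT w : all [in [set: 'I_n]] w.
Proof. by apply/allP => s; rewrite in_setT. Qed.

Lemma exists_reduced w : exists w', prod_refl w' = prod_refl w /\ reduced w'.
Proof.
have [k [[w' [Pw' <-]] kmin]] : exists k,
    (exists w', prod_refl w' = prod_refl w /\ size w' = k) /\
    forall i, (exists w', prod_refl w' = prod_refl w /\ size w' = i) -> (k <= i)%N.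
  by apply: (exists_minimal (k := size w)); exists w.
by exists w'; split => // w'' _ Pw''; apply: kmin; exists w''; rewrite Pw''.
Qed.

Lemma reduced_cat_r u x : reduced (u ++ x) -> reduced x.
Proof.
move=> red x' _ Px'; have := red (u ++ x') (all_setT _).
by rewrite !prod_refl_cat Px' !size_cat leq_add2l; apply.
Qed.

Lemma reduced_cat_l I u x : reduced (u ++ x) -> reduced_in I u.
Proof.
move=> red u' _ Pu'; have := red (u' ++ x) (all_setT _).
by rewrite !prod_refl_cat Pu' !size_cat leq_add2r; apply.
Qed.

Lemma left_ascent_cat_l I s u x : left_ascent s (u ++ x) -> left_ascent_in I s u.
Proof.
move=> asc u' _ Pu'; have := asc (u' ++ x) (all_setT _).
by rewrite !prod_refl_cat Pu' -mulmxA !size_cat leq_add2r; apply.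
Qed.

Lemma reduced_alt t s u : all [in [set t; s]] (t :: u) ->
  reduced_in [set t; s] (t :: u) -> t :: u = alt t s (size u).+1.
Proof.
elim: u t s => [|y u IH] t s //= /and3P [_ yts uts] red.
move: yts; rewrite !inE => /orP[] /eqP Ey; subst y.
  have := red u uts; rewrite prod_refl_cons prod_refl_consK => /(_ erefl).
  by rewrite /= ltnNge leqnSn.
have sts : all [in [set s; t]] (s :: u) by rewrite /= !inE eqxx setUC uts.
rewrite (IH s t) // => w' w'st Pw'.
have := red (t :: w'); rewrite /= !inE eqxx setUC w'st ltnS; apply=> //.
by rewrite !prod_refl_cons Pw' prod_refl_cons.
Qed.

Lemma alt_long_not_ascent a b k : a != b -> (m a b <= k)%N ->
  ~ left_ascent_in [set a; b] a (alt b a k).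
Proof.
move=> hab mk asc; have hba : b != a by rewrite eq_sym.
have [k' Ek'] : exists k', m a b = k'.+1.
  by exists (m a b).-1; rewrite prednK // ltnW // coxm_ge2.
pose rest := if odd (m a b) then alt a b (k - m a b) else alt b a (k - m a b).
have rest_ab : all [in [set a; b]] rest.
  by rewrite /rest; case: ifP => _; rewrite ?alt_in // setUC alt_in.
have size_rest : size rest = (k - m a b)%N.
  by rewrite /rest; case: ifP => _; rewrite size_alt.
have alt_ab : prod_refl (alt b a (m a b)) = r a *m prod_refl (alt b a k').
  by rewrite [in LHS]coxm_sym braid // coxm_sym Ek' /= prod_refl_cons.
have w_ab : all [in [set a; b]] (alt b a k' ++ rest).
  by rewrite all_cat rest_ab andbT setUC alt_in.
have Pw : prod_refl (alt b a k' ++ rest) = r a *m prod_refl (alt b a k).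
  rewrite -(subnKC mk) alt_cat -/rest !prod_refl_cat alt_ab.
  by rewrite !mulmxA refl_invol mul1mx.
by move: Ek' mk (asc _ w_ab Pw); rewrite size_cat !size_alt size_rest; lia.
Qed.

Lemma dihedral_root s t u : s != t -> all [in [set s; t]] u ->
    reduced_in [set s; t] u -> left_ascent_in [set s; t] s u ->
  exists al be, [/\ 0 <= al, 0 <= be & e s *m prod_refl u = al *: e s + be *: e t].
Proof.
move=> hst ust red asc; case: u ust red asc => [|x u] ust red asc.
  by exists 1, 0; rewrite prod_refl_nil mulmx1 scale1r scale0r addr0 ler01 lexx.
case/andP: (ust) => + ust'; rewrite !inE => /orP[] /eqP Ex; subst x.
  by have := asc u ust' (esym (prod_refl_consK _ _)); rewrite /= ltnn.
have Eu : t :: u = alt t s (size u).+1.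
  by apply: reduced_alt; rewrite setUC.
rewrite Eu; case: (ltnP (size u).+1 (m s t)) => [lt | ge]; first exact: alt_root_nonneg.
by case: (alt_long_not_ascent hst ge); rewrite -Eu.
Qed.

(* Take x of minimal length among the factorisations w = u x with u a word
   in I: a shorter word for y x would give a shorter such x. *)
Lemma parabolic_factor I w u0 x0 : reduced w -> all [in I] u0 ->
    prod_refl (u0 ++ x0) = prod_refl w -> size (u0 ++ x0) = size w ->
  exists u x : seq 'I_n, [/\ all [in I] u, prod_refl (u ++ x) = prod_refl w,
    size (u ++ x) = size w, (size x <= size x0)%N &
    forall y, y \in I -> left_ascent y x].
Proof.
move=> red u0I Pw0 Sw0.
pose F k := exists u x : seq 'I_n, [/\ all [in I] u, prod_refl (u ++ x) = prod_refl w,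
  size (u ++ x) = size w & size x = k].
have [k [[u [x [uI Pw Sw Sx]]] kmin]] : exists k, F k /\ forall i, F i -> (k <= i)%N.
  by apply: (exists_minimal (k := size x0)); exists u0, x0.
subst k; exists u, x; split => //; first by apply: kmin; exists u0, x0.
move=> y yI x' _ Px'; rewrite leqNgt; apply/negP => short.
have Pw' : prod_refl (rcons u y ++ x') = prod_refl w.
  rewrite prod_refl_cat prod_refl_rcons -mulmxA Px' (mulmxA (r y)) refl_invol mul1mx.
  by rewrite -prod_refl_cat.
have := red _ (all_setT _) Pw'; rewrite !size_cat size_rcons => long.
suff /kmin : F (size x') by rewrite leqNgt short.
exists (rcons u y), x'; split => //; first by rewrite all_rcons yI.
by move: Sw long short; rewrite !size_cat size_rcons; lia.
Qed.

Lemma root_nonneg_of_ascent s w : reduced w -> left_ascent s w ->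
  nonneg_row (e s *m prod_refl w).
Proof.
have [N] := ubnP (size w); elim: N => // N IH in s w *; rewrite ltnS => wN red asc.
case: w wN red asc => [|t w0] wN red asc.
  by rewrite prod_refl_nil mulmx1 => i; rewrite mxE ler0n.
have hst : s != t.
  apply/eqP => est; subst t.
  by have := asc w0 (all_setT _) (esym (prod_refl_consK _ _)); rewrite /= ltnn.
have t_st : all [in [set s; t]] [:: t] by rewrite /= !inE eqxx orbT.
have [u [x [ust Pw Sw Sx x_asc]]] := parabolic_factor red t_st erefl erefl.
have red' : reduced (u ++ x).
  by move=> w' _ Pw'; rewrite Sw; apply: red (all_setT _) _; rewrite Pw' Pw.
have asc' : left_ascent s (u ++ x).
  by move=> w' _ Pw'; rewrite Sw; apply: asc (all_setT _) _; rewrite Pw' Pw.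
have xN : (size x < N)%N by move: Sx wN => /=; lia.
have red_x := reduced_cat_r red'.
have [al [be [al0 be0 Eu]]] :=
  dihedral_root hst ust (reduced_cat_l red') (left_ascent_cat_l asc').
rewrite -Pw prod_refl_cat mulmxA Eu mulmxDl -!scalemxAl.
by apply: nonneg_row_comb => //; apply: IH => //; apply: x_asc; rewrite !inE eqxx ?orbT.
Qed.

Lemma root_sign s w :
  nonneg_row (e s *m prod_refl w) \/ nonneg_row (- (e s *m prod_refl w)).
Proof.
have [w1 [<- red1]] := exists_reduced w.
have [asc|not_asc] := pselect (left_ascent s w1).
  by left; apply: root_nonneg_of_ascent.
right; have [w2 [P2 red2]] := exists_reduced (s :: w1).
have short : (size w2 < size w1)%N.
  rewrite ltnNge; apply/negP => le12; apply: not_asc => w' _ Pw'.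
  by apply: leq_trans le12 (red2 _ (all_setT _) _); rewrite Pw' P2 prod_refl_cons.
have asc2 : left_ascent s w2.
  move=> w' _ Pw'; apply/ltnW/(leq_trans short)/(red1 _ (all_setT _)).
  by rewrite Pw' P2 prod_refl_consK.
have := root_nonneg_of_ascent red2 asc2.
by rewrite P2 prod_refl_cons mulmxA refl_e mulNmx.
Qed.

Lemma exists_pos_coord_form c : nonneg_row c -> bform c c = 1 ->
  [exists s, (0 < c 0 s) && (0 < bform c (e s))].
Proof.
move=> c0 cc; apply: contraT => /existsPn no_s.
suff : bform c c <= 0 by rewrite cc ler10.
rewrite bform_self; apply: sumr_le0 => s _.
have /nandP [|] := no_s s; rewrite -leNgt => cs.
  by rewrite (@le_anti _ _ (c 0 s) 0) ?cs ?c0 ?mul0r.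
exact: mulr_ge0_le0.
Qed.

Lemma nonneg_row_eq_e c s : nonneg_row c -> bform c c = 1 ->
  (forall t, t != s -> c 0 t = 0) -> c = e s.
Proof.
move=> c0 cc supp.
have cE : c = c 0 s *: e s.
  apply/rowP => t; rewrite [RHS]mxE [e s 0 t]mxE /=.
  by case: eqP => [->|/eqP ts]; rewrite ?mulr1 // mulr0 supp.
have cs1 : c 0 s = 1.
  have : c 0 s * c 0 s = 1.
    by rewrite -cc [in RHS]cE bformZl bformZr bform_ee_diag mulr1.
  by have := c0 s; nra.
by rewrite cE cs1 scale1r.
Qed.

Section FiniteCoxeterGroup.
Variable J : {set 'I_n}.
Variable elements : seq 'M[R]_n.
Hypothesis elementsP : forall g, inG m g -> g \in elements.

Let roots := [seq e s *m g | s <- enum 'I_n, g <- elements].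
Let nb_lower c := count (fun c' => height c' < height c) roots.

Lemma root_in_roots s w : e s *m prod_refl w \in roots.
Proof.
apply: (allpairs_f (fun s g => e s *m g)); first by rewrite mem_enum.
by apply: elementsP; exists w; rewrite all_setT.
Qed.

(* Descent: a positive root c of V_J other than a simple root has
   B(c, e_s) > 0 for some s in J with c_s > 0, and then c r_s is a positive
   root of V_J of smaller height. *)
Lemma rootrefl_inGJ_nonneg s w : nonneg_row (e s *m prod_refl w) ->
  in_VJ J (e s *m prod_refl w) -> inGJ m J (rootrefl (e s *m prod_refl w)).
Proof.
have [N] := ubnP (nb_lower (e s *m prod_refl w)).
elim: N => // N IH in s w *; rewrite ltnS => lowN.
set c := e s *m prod_refl w => c0 cJ.
have /existsP [u /andP [cu cbu]] := exists_pos_coord_form c0 (bform_root s w).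
have uJ : u \in J by apply/negPn/negP => /cJ cu0; rewrite cu0 ltxx in cu.
have [/existsP [v /andP [vu cv]] | /existsPn u_only] :=
  boolP [exists v, (v != u) && (c 0 v != 0)]; last first.
  have -> : c = e u.
    apply: nonneg_row_eq_e c0 (bform_root s w) _ => v vu.
    by apply/eqP; have := u_only v; rewrite vu negbK.
  by rewrite -refl_rootrefl; apply: inGJ_refl.
pose c' := e s *m prod_refl (rcons w u).
have c'E : c' = c - (2 * bform c (e u)) *: e u.
  by rewrite /c' prod_refl_rcons mulmxA refl_act.
have c'0 : nonneg_row c'.
  have c'v : c' 0 v = c 0 v by rewrite c'E !mxE /= (negbTE vu) mulr0 subr0.
  case: (root_sign s (rcons w u)) => // /(_ v); rewrite -/c' mxE c'v oppr_ge0 => cv0.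
  by move: cv; rewrite eq_le cv0 c0.
have c'J : in_VJ J c' by rewrite c'E; apply/in_VJB/in_VJZ/in_VJ_e.
have lower : (nb_lower c' < nb_lower c)%N.
  have : height c' < height c by rewrite /c' prod_refl_rcons mulmxA height_refl; lra.
  move=> hc'; apply: (sub_count_lt (x := c')) => //; last by rewrite ltxx.
    by move=> y /lt_trans; apply.
  exact: root_in_roots.
have -> : c = c' *m r u by rewrite /c' prod_refl_rcons !mulmxA -mulmxA refl_invol mulmx1.
rewrite rootrefl_refl; apply/inGJ_mul/inGJ_refl => //.
apply/inGJ_mul/(IH s (rcons w u)) => //; first exact: inGJ_refl.
exact: leq_trans lower lowN.
Qed.

Lemma rootrefl_inGJ s w :
  in_VJ J (e s *m prod_refl w) -> inGJ m J (rootrefl (e s *m prod_refl w)).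
Proof.
move=> cJ; case: (root_sign s w) => c0; first exact: rootrefl_inGJ_nonneg.
have cN : - (e s *m prod_refl w) = e s *m prod_refl (s :: w).
  by rewrite prod_refl_cons mulmxA refl_e mulNmx.
by rewrite -rootreflN cN; apply: rootrefl_inGJ_nonneg; rewrite -cN //; apply: in_VJN.
Qed.

Lemma conj_inGJ sigma w : is_sigmaJ m J sigma ->
    prod_refl w *m sigma = sigma *m prod_refl w ->
  forall h, inGJ m J h -> inGJ m J (prod_refl (rev w) *m h *m prod_refl w).
Proof.
move=> sigmaJ w_sigma; apply: inGJ_conj => s sJ.
rewrite prod_refl_conj; apply/rootrefl_inGJ/(inGJ_neg_VJ sigmaJ.1).
by rewrite -mulmxA w_sigma mulmxA (sigmaJ.2 _ (in_VJ_e sJ)) mulNmx.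
Qed.

Lemma centraliser_normalises sigma g : is_sigmaJ m J sigma -> inG m g ->
    g *m sigma = sigma *m g ->
  forall h, inGJ m J h <-> exists h', inGJ m J h' /\ h = g *m h' *m invmx g.
Proof.
move=> sigmaJ [w [_ ->]]; rewrite -/(prod_refl w) invmx_prod_refl => w_sigma h.
have rev_sigma : prod_refl (rev w) *m sigma = sigma *m prod_refl (rev w).
  rewrite -[LHS]mulmx1 -(prod_refl_Krev w) !mulmxA -(mulmxA _ sigma) -w_sigma.
  by rewrite mulmxA prod_refl_revK mul1mx.
split => [hJ | [h' [h'J ->]]].
  exists (prod_refl (rev w) *m h *m prod_refl w).
  split; first exact: (conj_inGJ sigmaJ w_sigma hJ).
  by rewrite !mulmxA prod_refl_Krev mul1mx -mulmxA prod_refl_Krev mulmx1.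
by have := conj_inGJ sigmaJ rev_sigma h'J; rewrite revK.
Qed.

End FiniteCoxeterGroup.

End CoxeterGeometry.

Theorem proposition7 (R : realType) (n : nat) (m : 'I_n -> 'I_n -> nat)
  (J : {set 'I_n}) (sigma : 'M[R]_n) :
  coxeter_matrix m -> finite_coxeter R m ->
  is_sigmaJ m J sigma ->
  forall g : 'M[R]_n, inG m g ->
    (g *m sigma = sigma *m g <->
     forall h : 'M[R]_n, inGJ m J h <->
       exists h' : 'M[R]_n, inGJ m J h' /\ h = g *m h' *m invmx g).
Proof.
move=> coxm [elements elementsP] sigmaJ g gG; split.
  exact: (centraliser_normalises coxm elementsP sigmaJ gG).
exact: (normaliser_centralises coxm sigmaJ gG).
Qed.
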